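(* Let $\mathbf 1=(1,1,1,1)^t\in\mathbb C^4$, $A=\mathbf 1\mathbf 1^*-I$ (the $4\times4$ matrix with $0$ on the diagonal and $1$ off the diagonal), and $t\in\mathbb R$. Then \[\|A+tI\|_m=\begin{cases}|t|&\text{if } t\ge1\text{ or } t\le-3,\\ \tfrac12|3-t|&\text{if } -3\le t\le1.\end{cases}\] In particular $\|A\|_m=\tfrac32$, $\|I\|_m=1$, and $\|A-I\|_m=2>(\|A\|_m^2+\|I\|_m^2)^{1/2}$.
   Context: For a $4\times4$ matrix $B=[b_{ij}]$, $\|B\|_m$ is the norm of the Schur multiplier $R=[r_{ij}]\mapsto[b_{ij}r_{ij}]$ on $4\times4$ complex matrices with the operator norm. *)

From HB Require Import structures.
From mathcomp Require Import all_boot all_order all_algebra.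
From mathcomp Require Import all_classical all_reals.
From mathcomp.real_closed Require Import complex.
Set Implicit Arguments. Unset Strict Implicit. Unset Printing Implicit Defensive.
Import Order.TTheory GRing.Theory Num.Theory.
Local Open Scope ring_scope.
Local Open Scope classical_set_scope.

Section Defs.
Variable R : realType.

Definition vnorm (x : 'cV[R[i]]_4) : R :=
  Num.sqrt (\sum_(k < 4) (Normc.normc (x k 0)) ^+ 2).

Definition opnorm (M : 'M[R[i]]_4) : R :=
  sup [set vnorm (M *m x) | x in [set x : 'cV[R[i]]_4 | vnorm x <= 1]].

Definition schur (B X : 'M[R[i]]_4) : 'M[R[i]]_4 :=
  \matrix_(k, l) (B k l * X k l).

Definition schur_norm (B : 'M[R[i]]_4) : R :=
  sup [set opnorm (schur B X) | X in [set X : 'M[R[i]]_4 | opnorm X <= 1]].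

Definition ones4 : 'cV[R[i]]_4 := const_mx 1.
Definition Amat : 'M[R[i]]_4 := ones4 *m (map_mx Num.conj ones4)^T - 1%:M.

Definition cR (t : R) : R[i] := Complex t 0.
End Defs.

From HB Require Import structures.
From mathcomp Require Import all_boot all_order all_algebra.
From mathcomp Require Import all_classical all_reals.
From mathcomp.real_closed Require Import complex.
From mathcomp Require Import ring lra.
Set Implicit Arguments. Unset Strict Implicit. Unset Printing Implicit Defensive.
Import Order.TTheory GRing.Theory Num.Theory.
Local Open Scope ring_scope.

(* Expand A + tI = J + (t - 1) I in the rank-one Hadamard basis:
   B = sum_k c_k w_k w_k^T with w_k the rows of the 4x4 Sylvester-Hadamard matrix,
   c_0 = (t + 3) / 4 and c_k = (t - 1) / 4 otherwise. Then B o X = sum_k c_k D_k X D_k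
   with unitary diagonal D_k, so the Schur multiplier norm is at most sum_k |c_k|,
   which equals |t| when t >= 1 or t <= -3 and (3 - t) / 2 in between. These values
   are attained: X = I gives |t| (test vector e_0), and the orthogonal matrix
   X = J/2 - I gives |3 - t| / 2 (test vector (1,1,1,1)/2). *)

Lemma sqr_addM_le (R : realFieldType) (S T P Q P' Q' : R) :
  0 <= P -> 0 <= Q -> 0 <= P' -> 0 <= Q' ->
  S ^+ 2 <= P * Q -> T ^+ 2 <= P' * Q' ->
  (S + T) ^+ 2 <= (P + P') * (Q + Q').
Proof.
move=> P0 Q0 P'0 Q'0 hS hT.
have amgm : (2 * S * T) ^+ 2 <= (P * Q' + P' * Q) ^+ 2.
  have hST : (S * T) ^+ 2 <= (P * Q) * (P' * Q') by rewrite exprMn ler_pM ?sqr_ge0.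
  have := sqr_ge0 (P * Q' - P' * Q).
  have -> : (2 * S * T) ^+ 2 = 4 * (S * T) ^+ 2 by ring.
  have -> : (P * Q' + P' * Q) ^+ 2 =
    (P * Q' - P' * Q) ^+ 2 + 4 * ((P * Q) * (P' * Q')) by ring.
  lra.
have cross : 2 * S * T <= P * Q' + P' * Q.
  apply: le_trans (ler_norm _) _.
  rewrite -ler_sqr ?nnegrE ?normr_ge0 ?addr_ge0 ?mulr_ge0 //.
  by rewrite real_normK ?num_real.
have -> : (S + T) ^+ 2 = S ^+ 2 + T ^+ 2 + 2 * S * T by ring.
have -> : (P + P') * (Q + Q') = P * Q + P' * Q' + (P * Q' + P' * Q) by ring.
lra.
Qed.

Lemma cauchy_schwarz2 (R : realFieldType) n (a b c d : 'I_n -> R) :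
  (\sum_(i < n) (a i * c i + b i * d i)) ^+ 2 <=
  (\sum_(i < n) (a i ^+ 2 + b i ^+ 2)) * (\sum_(i < n) (c i ^+ 2 + d i ^+ 2)).
Proof.
elim: n a b c d => [|n IH] a b c d; first by rewrite !big_ord0 expr0n /= mulr0.
have sum_ge0 (f g : 'I_n.+1 -> R) :
    0 <= \sum_(i < n) (f (widen_ord (leqnSn n) i) ^+ 2 + g (widen_ord (leqnSn n) i) ^+ 2).
  by apply: sumr_ge0 => i _; rewrite addr_ge0 ?sqr_ge0.
rewrite !big_ord_recr /=; apply: sqr_addM_le; rewrite ?sum_ge0 ?addr_ge0 ?sqr_ge0 ?IH //.
set x1 := a _; set x2 := b _; set y1 := c _; set y2 := d _.
have -> : (x1 ^+ 2 + x2 ^+ 2) * (y1 ^+ 2 + y2 ^+ 2) =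
  (x1 * y1 + x2 * y2) ^+ 2 + (x1 * y2 - x2 * y1) ^+ 2 by ring.
by rewrite lerDl sqr_ge0.
Qed.

Lemma walsh_bound_le_max (R : realFieldType) (a b : R) :
  `|a / 4 + b| + 3 * `|a / 4| <= Num.max `|a + b| (`|2 * b - a| / 2).
Proof.
rewrite le_max; have [a0|a0] := lerP 0 (a / 4); have [c0|c0] := lerP 0 (a / 4 + b).
- by rewrite ger0_norm // ger0_norm // ler_normr; apply/orP; left; lra.
- rewrite ltr0_norm // ger0_norm //; apply/orP; right.
  by rewrite ler_pdivlMr // ler_normr; apply/orP; right; lra.
- rewrite ger0_norm // ltr0_norm //; apply/orP; right.
  by rewrite ler_pdivlMr // ler_normr; apply/orP; left; lra.
- by rewrite ltr0_norm // ltr0_norm // ler_normr; apply/orP; left; apply/orP; right; lra.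
Qed.

Lemma max_norm_piecewise (R : realFieldType) (t : R) :
  Num.max `|t| (`|3 - t| / 2) = if (1 <= t) || (t <= -3) then `|t| else `|3 - t| / 2.
Proof.
have [t1|t1] := lerP 1 t.
  rewrite max_l // ler_pdivrMr // (ger0_norm (_ : 0 <= t)) ?ler_norml; last by lra.
  by apply/andP; split; lra.
have [t3|t3] := lerP t (-3); rewrite /=.
  rewrite max_l // ler_pdivrMr // (ler0_norm (_ : t <= 0)) ?ger0_norm //; lra.
rewrite max_r // ler_pdivlMr // (ger0_norm (_ : 0 <= 3 - t)); last by lra.
by rewrite -[X in _ * X]normr_nat -normrM ler_norml; apply/andP; split; lra.
Qed.

Section EuclideanNorm.
Context {R : realType}.
Implicit Types (z : R[i]) (x y : 'cV[R[i]]_4) (M X : 'M[R[i]]_4).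

Definition normc2 z : R := complex.Re z ^+ 2 + complex.Im z ^+ 2.
Definition vnorm2 x : R := \sum_(k < 4) normc2 (x k 0).

Lemma normc2_ge0 z : 0 <= normc2 z.
Proof. by rewrite addr_ge0 ?sqr_ge0. Qed.

Lemma vnorm2_ge0 x : 0 <= vnorm2 x.
Proof. by rewrite sumr_ge0 // => k _; apply: normc2_ge0. Qed.

Lemma normc2D z1 z2 : normc2 (z1 + z2) = normc2 z1 + normc2 z2 +
  2 * (complex.Re z1 * complex.Re z2 + complex.Im z1 * complex.Im z2).
Proof. by case: z1 => a1 b1; case: z2 => a2 b2; rewrite /normc2; simpc => /=; ring. Qed.

Lemma normc2M z1 z2 : normc2 (z1 * z2) = normc2 z1 * normc2 z2.
Proof. by case: z1 => a1 b1; case: z2 => a2 b2; rewrite /normc2; simpc => /=; ring. Qed.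

Lemma normc2_real (r : R) : normc2 (cR r) = r ^+ 2.
Proof. by rewrite /normc2 /= expr0n /= addr0. Qed.

Lemma vnormE x : vnorm x = Num.sqrt (vnorm2 x).
Proof.
congr Num.sqrt; apply: eq_bigr => k _.
by case: (x k 0) => a b /=; rewrite sqr_sqrtr // addr_ge0 ?sqr_ge0.
Qed.

Lemma vnorm_ge0 x : 0 <= vnorm x.
Proof. by rewrite vnormE sqrtr_ge0. Qed.

Lemma vnorm0 : vnorm (0 : 'cV[R[i]]_4) = 0.
Proof. by rewrite vnormE /vnorm2 big1 ?sqrtr0 // => k _; rewrite mxE /normc2 expr0n /= addr0. Qed.

Lemma vnormD x y : vnorm (x + y) <= vnorm x + vnorm y.
Proof.
set S := \sum_(k < 4) (complex.Re (x k 0) * complex.Re (y k 0) +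
                       complex.Im (x k 0) * complex.Im (y k 0)).
have vnorm2D : vnorm2 (x + y) = vnorm2 x + vnorm2 y + 2 * S.
  rewrite /vnorm2 mulr_sumr -!big_split; apply: eq_bigr => k _.
  by rewrite mxE normc2D.
have cs : S <= vnorm x * vnorm y.
  rewrite !vnormE -sqrtrM ?vnorm2_ge0 //.
  apply: le_trans (ler_norm S) _; rewrite -sqrtr_sqr ler_sqrt ?mulr_ge0 ?vnorm2_ge0 //.
  exact: cauchy_schwarz2.
rewrite -(ger0_norm (addr_ge0 (vnorm_ge0 x) (vnorm_ge0 y))) -sqrtr_sqr.
rewrite [vnorm (x + y)]vnormE ler_sqrt ?sqr_ge0 // vnorm2D.
have -> : (vnorm x + vnorm y) ^+ 2 =
  vnorm x ^+ 2 + vnorm y ^+ 2 + 2 * (vnorm x * vnorm y) by ring.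
rewrite !vnormE !sqr_sqrtr ?vnorm2_ge0 // -!vnormE; lra.
Qed.

Lemma vnorm_sum n (f : 'I_n -> 'cV[R[i]]_4) :
  vnorm (\sum_(i < n) f i) <= \sum_(i < n) vnorm (f i).
Proof.
elim/big_ind2: _ => [|v1 r1 v2 r2 h1 h2|//]; first by rewrite vnorm0.
exact: le_trans (vnormD _ _) (lerD h1 h2).
Qed.

Lemma vnormZ c x : vnorm (c *: x) = Num.sqrt (normc2 c) * vnorm x.
Proof.
rewrite !vnormE -sqrtrM ?normc2_ge0 //; congr Num.sqrt.
by rewrite /vnorm2 mulr_sumr; apply: eq_bigr => k _; rewrite mxE normc2M.
Qed.

Lemma vnormZ_real (r : R) x : vnorm (cR r *: x) = `|r| * vnorm x.
Proof. by rewrite vnormZ normc2_real sqrtr_sqr. Qed.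

Lemma normc2_le_vnorm2 x j : normc2 (x j 0) <= vnorm2 x.
Proof. by rewrite /vnorm2 (bigD1 j) //= lerDl sumr_ge0 // => k _; apply: normc2_ge0. Qed.

Lemma mulmx_colE M x : M *m x = \sum_(j < 4) x j 0 *: col j M.
Proof.
apply/matrixP => i k; rewrite !mxE summxE; apply: eq_bigr => j _.
by rewrite !mxE (ord1 k) mulrC.
Qed.

Lemma vnorm_mulmx_le_cols M x :
  vnorm x <= 1 -> vnorm (M *m x) <= \sum_(j < 4) vnorm (col j M).
Proof.
move=> x1; rewrite mulmx_colE; apply: le_trans (vnorm_sum _) _.
apply: ler_sum => j _; rewrite vnormZ -[leRHS]mul1r ler_wpM2r ?vnorm_ge0 //.
by apply: le_trans x1; rewrite vnormE ler_sqrt ?vnorm2_ge0 ?normc2_le_vnorm2.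
Qed.

Lemma opnorm_ge_vnorm M x : vnorm x <= 1 -> vnorm (M *m x) <= opnorm M.
Proof.
move=> x1; apply: ub_le_sup; last by exists x.
exists (\sum_(j < 4) vnorm (col j M)) => _ [z z1 <-].
exact: vnorm_mulmx_le_cols.
Qed.

Lemma opnorm_le M (c : R) :
  (forall x, vnorm x <= 1 -> vnorm (M *m x) <= c) -> opnorm M <= c.
Proof.
move=> Mc; apply: ge_sup; last by move=> _ [x x1 <-]; apply: Mc.
by exists (vnorm (M *m 0)), 0 => //=; rewrite vnorm0 ler01.
Qed.

Lemma opnorm0 : opnorm (0 : 'M[R[i]]_4) = 0.
Proof.
apply/eqP; rewrite eq_le; apply/andP; split.
  by apply: opnorm_le => x _; rewrite mul0mx vnorm0.
by rewrite -vnorm0 -(mul0mx _ (0 : 'cV[R[i]]_4)) opnorm_ge_vnorm // vnorm0.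
Qed.

End EuclideanNorm.

Section WalshDecomposition.
Context {R : realType}.
Implicit Types (x : 'cV[R[i]]_4) (B X : 'M[R[i]]_4).

(* [walsh k] is the k-th row of the 4x4 Sylvester-Hadamard matrix: the character
   of (Z/2)^2 indexed by the bits of [k], evaluated at the bits of [i]. *)
Definition walsh (k i : 'I_4) : R :=
  if odd ((k %% 2) * (i %% 2) + (k %/ 2) * (i %/ 2)) then -1 else 1.

Definition walsh_decomposition B (c : 'I_4 -> R) :=
  forall i j, B i j = \sum_(k < 4) cR (c k) * (cR (walsh k i) * cR (walsh k j)).

Definition walsh_scale k x : 'cV[R[i]]_4 := \col_i (cR (walsh k i) * x i 0).

(* [D_k X D_k] for the unitary diagonal matrix [D_k = diag (walsh k)]. *)
Definition walsh_conj k X : 'M[R[i]]_4 :=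
  \matrix_(i, j) (cR (walsh k i) * cR (walsh k j) * X i j).

Lemma vnorm_walsh_scale k x : vnorm (walsh_scale k x) = vnorm x.
Proof.
rewrite !vnormE; congr Num.sqrt; apply: eq_bigr => i _.
by rewrite mxE normc2M normc2_real /walsh; case: ifP; rewrite ?sqrrN expr1n mul1r.
Qed.

Lemma walsh_conj_mulmx k X x :
  walsh_conj k X *m x = walsh_scale k (X *m walsh_scale k x).
Proof.
apply/matrixP => i l; rewrite !mxE mulr_sumr; apply: eq_bigr => j _.
by rewrite !mxE (ord1 l); ring.
Qed.

Lemma opnorm_walsh_conj k X : opnorm (walsh_conj k X) <= opnorm X.
Proof.
apply: opnorm_le => x x1; rewrite walsh_conj_mulmx vnorm_walsh_scale.
by apply: opnorm_ge_vnorm; rewrite vnorm_walsh_scale.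
Qed.

Lemma schur_walshE B c X : walsh_decomposition B c ->
  schur B X = \sum_(k < 4) cR (c k) *: walsh_conj k X.
Proof.
move=> Bc; apply/matrixP => i j; rewrite !mxE summxE Bc mulr_suml.
by apply: eq_bigr => k _; rewrite !mxE; ring.
Qed.

Lemma opnorm_schur_walsh_le B c X : walsh_decomposition B c ->
  opnorm (schur B X) <= (\sum_(k < 4) `|c k|) * opnorm X.
Proof.
move=> Bc; apply: opnorm_le => x x1.
rewrite (schur_walshE X Bc) mulmx_suml mulr_suml.
apply: le_trans (vnorm_sum _) _.
apply: ler_sum => k _; rewrite -scalemxAl vnormZ_real ler_wpM2l ?normr_ge0 //.
exact: le_trans (opnorm_ge_vnorm _ x1) (opnorm_walsh_conj k X).
Qed.

Lemma schur_norm_walsh_le B c : walsh_decomposition B c ->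
  schur_norm B <= \sum_(k < 4) `|c k|.
Proof.
move=> Bc; apply: ge_sup.
  by exists (opnorm (schur B 0)), 0 => //=; rewrite opnorm0.
move=> _ [X X1 <-]; apply: le_trans (opnorm_schur_walsh_le X Bc) _.
by rewrite ler_piMr ?sumr_ge0 // => k _; rewrite normr_ge0.
Qed.

Lemma opnorm_schur_le_schur_norm B c X : walsh_decomposition B c ->
  opnorm X <= 1 -> opnorm (schur B X) <= schur_norm B.
Proof.
move=> Bc X1; apply: ub_le_sup; last by exists X.
exists (\sum_(k < 4) `|c k|) => _ [Y Y1 <-].
apply: le_trans (opnorm_schur_walsh_le Y Bc) _.
by rewrite ler_piMr ?sumr_ge0 // => k _; rewrite normr_ge0.
Qed.

End WalshDecomposition.

Section RealMatrices.
Context {R : realType}.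
Implicit Types (f : 'I_4 -> 'I_4 -> R) (g : 'I_4 -> R).

Lemma cRM (r s : R) : cR (r * s) = cR r * cR s.
Proof. by rewrite /cR; simpc. Qed.

Lemma cR_sum n (g : 'I_n -> R) : cR (\sum_(i < n) g i) = \sum_(i < n) cR (g i).
Proof. by elim/big_rec2: _ => // j r z _ <-; rewrite /cR; simpc. Qed.

Lemma Re_sum n (F : 'I_n -> R[i]) :
  complex.Re (\sum_(j < n) F j) = \sum_(j < n) complex.Re (F j).
Proof. by elim/big_rec2: _ => // j a z _ <-; case: (F j) => ? ?; case: z => ? ?. Qed.

Lemma Im_sum n (F : 'I_n -> R[i]) :
  complex.Im (\sum_(j < n) F j) = \sum_(j < n) complex.Im (F j).
Proof. by elim/big_rec2: _ => // j a z _ <-; case: (F j) => ? ?; case: z => ? ?. Qed.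

Definition realmx f : 'M[R[i]]_4 := \matrix_(i, j) cR (f i j).
Definition realcv g : 'cV[R[i]]_4 := \col_i cR (g i).

Lemma schur_realmx f f' : schur (realmx f) (realmx f') = realmx (fun i j => f i j * f' i j).
Proof. by apply/matrixP => i j; rewrite !mxE cRM. Qed.

Lemma realmx_mulcv f g : realmx f *m realcv g = realcv (fun i => \sum_(j < 4) f i j * g j).
Proof. by apply/matrixP => i k; rewrite !mxE cR_sum; apply: eq_bigr => j _; rewrite !mxE cRM. Qed.

Lemma vnorm_realcv g : vnorm (realcv g) = Num.sqrt (\sum_(i < 4) g i ^+ 2).
Proof. by rewrite vnormE; congr Num.sqrt; apply: eq_bigr => i _; rewrite mxE normc2_real. Qed.

(* A real isometry of R^4 acts on the real and imaginary parts of a complex vector separately. *)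
Lemma opnorm_realmx_isometry f :
  (forall v : 'I_4 -> R,
     \sum_(i < 4) (\sum_(j < 4) f i j * v j) ^+ 2 = \sum_(i < 4) v i ^+ 2) ->
  opnorm (realmx f) <= 1.
Proof.
move=> isof; apply: opnorm_le => x x1; apply: le_trans x1.
rewrite !vnormE /vnorm2 ler_sqrt ?sumr_ge0 // => [|i _]; last exact: normc2_ge0.
have vnorm2_parts (y : 'cV[R[i]]_4) : \sum_(i < 4) normc2 (y i 0) =
    \sum_(i < 4) complex.Re (y i 0) ^+ 2 + \sum_(i < 4) complex.Im (y i 0) ^+ 2.
  by rewrite -big_split.
rewrite !vnorm2_parts -(isof (fun j => complex.Re (x j 0))).
rewrite -(isof (fun j => complex.Im (x j 0))).
rewrite le_eqVlt; apply/predU1P; left; congr (_ + _); apply: eq_bigr => i _;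
  rewrite mxE ?Re_sum ?Im_sum; congr (_ ^+ 2); apply: eq_bigr => j _;
  by rewrite mxE; case: (x j 0) => ? ?; rewrite /cR; simpc.
Qed.

Lemma schur_norm_ge_test (f : 'I_4 -> 'I_4 -> R) c (g : 'I_4 -> 'I_4 -> R) (v : 'I_4 -> R) :
  walsh_decomposition (realmx f) c -> opnorm (realmx g) <= 1 ->
  \sum_(i < 4) v i ^+ 2 <= 1 ->
  Num.sqrt (\sum_(i < 4) (\sum_(j < 4) f i j * g i j * v j) ^+ 2) <= schur_norm (realmx f).
Proof.
move=> fc g1 v1; apply: le_trans (opnorm_schur_le_schur_norm fc g1).
rewrite schur_realmx -vnorm_realcv -realmx_mulcv opnorm_ge_vnorm //.
by rewrite vnorm_realcv -sqrtr1 ler_sqrt.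
Qed.

End RealMatrices.

Section DiagonalPlusConstant.
Context {R : realType}.
Variables a b : R.

(* The matrix [a I + b J], [J] the all-ones matrix; [A + t I] is the case [a = t - 1], [b = 1]. *)
Definition diag_const (i j : 'I_4) : R := (if i == j then a else 0) + b.

Definition diag_const_walsh (k : 'I_4) : R := a / 4 + (if k == 0 then b else 0).

Lemma walsh_decomposition_diag_const :
  walsh_decomposition (realmx diag_const) diag_const_walsh.
Proof.
move=> i j; rewrite mxE; under eq_bigr => k _ do rewrite -!cRM; rewrite -cR_sum.
congr cR; case: i => [[|[|[|[|i]]]] hi] //; case: j => [[|[|[|[|j]]]] hj] //;
rewrite !big_ord_recr big_ord0 /= /diag_const /diag_const_walsh /walsh /=; by field.
Qed.

Lemma schur_norm_diag_const_le :
  schur_norm (realmx diag_const) <= `|a / 4 + b| + 3 * `|a / 4|.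
Proof.
apply: le_trans (schur_norm_walsh_le walsh_decomposition_diag_const) _.
by rewrite !big_ord_recr big_ord0 /= /diag_const_walsh /= !addr0; lra.
Qed.

Lemma schur_norm_diag_const_ge_id : `|a + b| <= schur_norm (realmx diag_const).
Proof.
pose id4 (i j : 'I_4) : R := (i == j)%:R.
pose e0 (i : 'I_4) : R := (i == 0)%:R.
have id4_isometry : opnorm (realmx id4) <= 1.
  apply: opnorm_realmx_isometry => v.
  by rewrite !big_ord_recr !big_ord0 /= /id4 /=; ring.
have := schur_norm_ge_test (v := e0) walsh_decomposition_diag_const id4_isometry.
have -> : \sum_(i < 4) (\sum_(j < 4) diag_const i j * id4 i j * e0 j) ^+ 2 = (a + b) ^+ 2.
  by rewrite !big_ord_recr !big_ord0 /= /diag_const /id4 /e0 /=; ring.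
rewrite sqrtr_sqr; apply.
by rewrite !big_ord_recr !big_ord0 /= /e0 /=; lra.
Qed.

Lemma schur_norm_diag_const_ge_householder :
  `|2 * b - a| / 2 <= schur_norm (realmx diag_const).
Proof.
(* [J / 2 - I] is (minus) the reflection in the hyperplane orthogonal to [(1,1,1,1)]. *)
pose hh (i j : 'I_4) : R := 1 / 2 - (i == j)%:R.
pose half (i : 'I_4) : R := 1 / 2.
have hh_isometry : opnorm (realmx hh) <= 1.
  apply: opnorm_realmx_isometry => v.
  by rewrite !big_ord_recr !big_ord0 /= /hh /=; field.
have := schur_norm_ge_test (v := half) walsh_decomposition_diag_const hh_isometry.
have -> : \sum_(i < 4) (\sum_(j < 4) diag_const i j * hh i j * half j) ^+ 2 =
    ((2 * b - a) / 2) ^+ 2.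
  by rewrite !big_ord_recr !big_ord0 /= /diag_const /hh /half /=; field.
rewrite sqrtr_sqr normrM [`|2^-1|]ger0_norm ?invr_ge0 //; apply.
by rewrite !big_ord_recr !big_ord0 /= /half; lra.
Qed.

Lemma schur_norm_diag_const :
  schur_norm (realmx diag_const) = Num.max `|a + b| (`|2 * b - a| / 2).
Proof.
apply/eqP; rewrite eq_le ge_max schur_norm_diag_const_ge_id.
rewrite schur_norm_diag_const_ge_householder !andbT.
apply: le_trans schur_norm_diag_const_le _; exact: walsh_bound_le_max.
Qed.

End DiagonalPlusConstant.

Lemma Amat_add_scalar_diag_const (R : realType) (t : R) :
  Amat R + (cR t)%:M = realmx (diag_const (t - 1) 1).
Proof.
apply/matrixP => i j; rewrite !mxE big_ord1 !mxE rmorph1 mul1r /diag_const.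
by case: (i == j); rewrite /cR; simpc; rewrite ?subrK.
Qed.

Lemma identity_diag_const (R : realType) :
  (1%:M : 'M[R[i]]_4) = realmx (diag_const 1 0).
Proof.
by apply/matrixP => i j; rewrite !mxE /diag_const addr0; case: (i == j).
Qed.

Lemma schur_norm_Amat_add_scalar (R : realType) (t : R) :
  schur_norm (Amat R + (cR t)%:M) = Num.max `|t| (`|3 - t| / 2).
Proof.
rewrite Amat_add_scalar_diag_const schur_norm_diag_const subrK.
by have -> : 2 * 1 - (t - 1) = 3 - t :> R by ring.
Qed.

Lemma schur_norm_Amat (R : realType) : schur_norm (Amat R) = 3 / 2.
Proof.
have -> : Amat R = Amat R + (cR 0)%:M by apply/matrixP => i j; rewrite !mxE mul0rn addr0.
rewrite schur_norm_Amat_add_scalar max_norm_piecewise ifF; last first.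
  by apply/negbTE; rewrite negb_or -!ltNge; apply/andP; split; lra.
by rewrite subr0 ger0_norm.
Qed.

Lemma schur_norm_Amat_sub_identity (R : realType) : schur_norm (Amat R - 1%:M) = 2.
Proof.
have -> : Amat R - 1%:M = Amat R + (cR (-1))%:M.
  have -> : cR (-1) = -1 :> R[i] by rewrite /cR; simpc.
  by apply/matrixP => i j; rewrite !mxE mulNrn.
rewrite schur_norm_Amat_add_scalar max_norm_piecewise ifF; last first.
  by apply/negbTE; rewrite negb_or -!ltNge; apply/andP; split; lra.
by rewrite opprK ger0_norm; lra.
Qed.

Lemma schur_norm_identity (R : realType) : schur_norm (1%:M : 'M[R[i]]_4) = 1.
Proof.
rewrite identity_diag_const schur_norm_diag_const addr0 mulr0 sub0r normrN.
rewrite (ger0_norm (ler01 : (0 : R) <= 1)) max_l //; lra.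
Qed.

Theorem mainTheorem15 (R : realType) :
  (forall t : R,
     schur_norm (Amat R + (cR t)%:M) =
       (if (1 <= t) || (t <= -3) then `|t| else `|3 - t| / 2)) /\
  schur_norm (Amat R) = 3 / 2 /\
  schur_norm (1%:M : 'M[R[i]]_4) = 1 /\
  schur_norm (Amat R - 1%:M) = 2 /\
  2 > Num.sqrt ((schur_norm (Amat R)) ^+ 2 + (schur_norm (1%:M : 'M[R[i]]_4)) ^+ 2).
Proof.
split=> [t|]; first by rewrite schur_norm_Amat_add_scalar max_norm_piecewise.
rewrite schur_norm_Amat schur_norm_identity schur_norm_Amat_sub_identity.
do 3!(split; first by []).
have two : (2 : R) = Num.sqrt (2 ^+ 2) by rewrite sqrtr_sqr ger0_norm.
rewrite [X in _ < X]two ltr_sqrt; lra.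
Qed.
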